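(* The map $M\mapsto\mathfrak W_M$ is a bijection from the set of submonoids of $(\mathbb N_0,+)$ onto the set of bracket pattern categories.
   Context: $\mathbb N=\{1,2,\dots\}$, $\mathbb N_0=\mathbb N\cup\{0\}$. A bracket pattern is a non-empty finite subset $w\subseteq\mathbb N$; $\|w\|:=\max(w)$. For bracket patterns $w,w'$: superposition $w\cup w'$; for $j\in w$ the projection $\cap_j w:=\{i\in w\mid i\le j\}$; the dual $w^\dagger:=\{\|w\|-i\mid i\in\mathbb N_0,\ i<\|w\|,\ i\notin w\}$. A bracket pattern category is a (possibly empty) set of bracket patterns closed under superposition, duals and projections. The completion of a bracket pattern $w$ is $A(w):=\{j-i\mid j\in w,\ i\in\mathbb N_0,\ i\notin w,\ i<j\}$. For a submonoid $M$ of $(\mathbb N_0,+)$ (a subset containing $0$ and closed under addition), $\mathfrak W_M:=\{w\mid w\text{ bracket pattern},\ A(w)\subseteq\mathbb N_0\setminus M\}$. *)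

From mathcomp Require Import all_boot.
From mathcomp Require Import finmap.
Set Implicit Arguments. Unset Strict Implicit. Unset Printing Implicit Defensive.
Local Open Scope fset_scope.

Definition bracket_pattern (w : {fset nat}) : Prop :=
  w != fset0 /\ (0%N \notin w).

Definition bnorm (w : {fset nat}) : nat := \max_(i <- w) i.

Definition superpos (w w' : {fset nat}) : {fset nat} := w `|` w'.

Definition proj (j : nat) (w : {fset nat}) : {fset nat} :=
  [fset i in w | (i <= j)%N].

Definition dual (w : {fset nat}) : {fset nat} :=
  [fset (bnorm w - i)%N | i in [seq i <- iota 0 (bnorm w) | i \notin w]].

Definition bp_category (C : {fset nat} -> Prop) : Prop :=
  (forall w, C w -> bracket_pattern w) /\
  (forall w w', C w -> C w' -> C (superpos w w')) /\
  (forall w, C w -> C (dual w)) /\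
  (forall w j, C w -> j \in w -> C (proj j w)).

Definition completion (w : {fset nat}) : nat -> Prop :=
  fun k => exists j i : nat, [/\ j \in w, i \notin w, (i < j)%N & k = (j - i)%N].

Definition submonoid (M : nat -> Prop) : Prop :=
  M 0%N /\ (forall a b, M a -> M b -> M (a + b)%N).

Definition W (M : nat -> Prop) : {fset nat} -> Prop :=
  fun w => bracket_pattern w /\ (forall k, completion w k -> ~ M k).

From mathcomp Require Import all_boot finmap zify boolp.
Set Implicit Arguments. Unset Strict Implicit.
Local Open Scope fset_scope.

(* The completion only shrinks under the three operations:
   A(w ∪ w') ⊆ A(w) ∪ A(w'), A(∩_j w) ⊆ A(w) and A(w†) ⊆ A(w), so every W_M is a
   category.  W_M determines M: if k ∉ M, the pattern {j ∈ [1, k] | k - j ∈ M}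
   lies in W_M, because M is additively closed, and has k in its completion.
   Conversely, for a category C let M be the complement of the union of the
   completions of the members of C.  It is a submonoid, since a + b ∈ A(w) with
   a, b > 0 forces a ∈ A(w) or b ∈ A(w), and clearly C ⊆ W_M.  For the reverse
   inclusion: every element of a completion is the norm of a member of C
   (project, dualize, project); members of equal norm can be intersected, as
   v ∩ v' = (v† ∪ v'†)†; and if ‖u‖ = n and ‖q‖ = n - i, then (q ∪ u)† has norm n
   and avoids i.  Intersecting such patterns over the holes of ∩_j w yields a
   member of C inside w containing j, and the union of these over j ∈ w is w. *)

Lemma leq_bnorm (w : {fset nat}) x : x \in w -> x <= bnorm w.
Proof. by move=> xw; apply: (leq_bigmax_seq (F := id)). Qed.

Lemma bnorm_mem (w : {fset nat}) : w != fset0 -> bnorm w \in w.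
Proof.
case/fset0Pn=> x xw.
have: (bnorm w == 0) || (bnorm w \in w).
  rewrite /bnorm big_seq; elim/big_ind: _ => // [m n|i ->]; last by rewrite orbT.
  by rewrite /maxn; case: ltnP.
case/orP=> // /eqP w_0; move: (leq_bnorm xw); rewrite w_0 leqn0 => /eqP x0.
by rewrite -x0.
Qed.

Lemma bnormE (w : {fset nat}) n : n \in w -> {in w, forall x, x <= n} -> bnorm w = n.
Proof.
move=> nw le_w; apply/eqP; rewrite eqn_leq leq_bnorm // andbT.
by apply/bigmax_leqP_seq => x xw _; apply: le_w.
Qed.

Lemma bnorm_gt0 (w : {fset nat}) : bracket_pattern w -> 0 < bnorm w.
Proof.
case=> w_ne w0; rewrite lt0n; apply: contraNneq w0 => <-; exact: bnorm_mem.
Qed.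

Lemma bnorm_superpos (w w' : {fset nat}) : w != fset0 -> w' != fset0 ->
  bnorm (superpos w w') = maxn (bnorm w) (bnorm w').
Proof.
move=> w_ne w'_ne; apply: bnormE => [|x]; rewrite !inE.
  by rewrite /maxn; case: ltnP => _; rewrite bnorm_mem ?orbT.
by case/orP=> /leq_bnorm; lia.
Qed.

Lemma mem_dual (w : {fset nat}) x :
  (x \in dual w) = (0 < x <= bnorm w) && (bnorm w - x \notin w).
Proof.
apply/imfsetP/idP => [[i /= + ->]|/andP[x_range xw]].
  rewrite mem_filter mem_iota add0n => /andP[iw lt_i].
  have -> : bnorm w - (bnorm w - i) = i by lia.
  by rewrite iw andbT; apply/andP; split; lia.
exists (bnorm w - x); last by lia.
by rewrite /= mem_filter mem_iota xw /=; lia.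
Qed.

Lemma mem_proj j (w : {fset nat}) x : (x \in proj j w) = (x \in w) && (x <= j).
Proof. by rewrite !inE. Qed.

Lemma bnorm_proj j (w : {fset nat}) : j \in w -> bnorm (proj j w) = j.
Proof.
by move=> jw; apply: bnormE => [|x]; rewrite mem_proj ?jw ?leqnn // => /andP[].
Qed.

Lemma bnorm_dual (w : {fset nat}) : bracket_pattern w -> bnorm (dual w) = bnorm w.
Proof.
move=> bp_w; have n_gt0 := bnorm_gt0 bp_w; case: bp_w => _ w0.
apply: bnormE => [|x]; first by rewrite mem_dual subnn w0 leqnn n_gt0.
by rewrite mem_dual => /andP[/andP[]].
Qed.

Lemma bracket_pattern_superpos (w w' : {fset nat}) :
  bracket_pattern w -> bracket_pattern w' -> bracket_pattern (superpos w w').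
Proof.
case=> /fset0Pn[x xw] w0 [_ w'0]; split; last by rewrite inE negb_or w0 w'0.
by apply/fset0Pn; exists x; rewrite inE xw.
Qed.

Lemma bracket_pattern_dual (w : {fset nat}) :
  bracket_pattern w -> bracket_pattern (dual w).
Proof.
move=> bp_w; have n_gt0 := bnorm_gt0 bp_w; case: bp_w => _ w0.
split; last by rewrite mem_dual.
by apply/fset0Pn; exists (bnorm w); rewrite mem_dual subnn w0 leqnn n_gt0.
Qed.

Lemma bracket_pattern_proj j (w : {fset nat}) :
  bracket_pattern w -> j \in w -> bracket_pattern (proj j w).
Proof.
case=> _ w0 jw; split; last by rewrite mem_proj (negbTE w0).
by apply/fset0Pn; exists j; rewrite mem_proj jw leqnn.
Qed.

Lemma completion_gt0 (w : {fset nat}) k : completion w k -> 0 < k.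
Proof. by case=> j [i [_ _ lt_ij ->]]; rewrite subn_gt0. Qed.

Lemma completion_superpos (w w' : {fset nat}) k :
  completion (superpos w w') k -> completion w k \/ completion w' k.
Proof.
case=> j [i []]; rewrite !inE negb_or => /orP[] jw /andP[iw iw'] lt_ij ->.
  by left; exists j, i.
by right; exists j, i.
Qed.

Lemma completion_proj j (w : {fset nat}) k :
  completion (proj j w) k -> completion w k.
Proof.
case=> a [i []]; rewrite !mem_proj => /andP[aw le_aj] i_notin lt_ia ->.
exists a, i; split => //; apply: contra i_notin => ->; lia.
Qed.

Lemma completion_dual (w : {fset nat}) k : completion (dual w) k -> completion w k.
Proof.
case=> a [b []]; rewrite !mem_dual => /andP[/andP[a_gt0 le_an] a'_notin] b_notin lt_ba ->.
have w_ne : w != fset0 by apply: contraTneq le_an => ->; rewrite /bnorm big_nil; lia.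
exists (bnorm w - b), (bnorm w - a); split; [|done|lia|lia].
move: b_notin; rewrite negb_and negbK; case: (posnP b) => [-> _|b_gt0].
  by rewrite subn0 bnorm_mem.
case/orP => //; lia.
Qed.

Lemma completion_add (w : {fset nat}) a b : 0 < a -> 0 < b ->
  completion w (a + b) -> completion w a \/ completion w b.
Proof.
move=> a_gt0 b_gt0 [j [i [jw iw lt_ij ab_eq]]].
case: (boolP ((i + a)%N \in w)) => iaw.
  by left; exists (i + a)%N, i; split => //; lia.
by right; exists j, (i + a)%N; split => //; lia.
Qed.

Lemma W_bp_category (M : nat -> Prop) : bp_category (W M).
Proof.
split; first by move=> w [].
split; last split.
- move=> w w' [bp_w Mw] [bp_w' Mw']; split; first exact: bracket_pattern_superpos.
  by move=> k /completion_superpos[]; [apply: Mw | apply: Mw'].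
- move=> w [bp_w Mw]; split; first exact: bracket_pattern_dual.
  by move=> k /completion_dual; apply: Mw.
- move=> w j [bp_w Mw] jw; split; first exact: bracket_pattern_proj.
  by move=> k /completion_proj; apply: Mw.
Qed.

Definition reflected_pattern (M : nat -> Prop) (k : nat) : {fset nat} :=
  [fset j in iota 1 k | `[< M (k - j) >]].

Lemma mem_reflected_pattern M k j :
  (j \in reflected_pattern M k) = (0 < j <= k) && `[< M (k - j) >].
Proof. by rewrite !inE mem_iota; congr (_ && _); lia. Qed.

Section ReflectedPattern.
Variables (M : nat -> Prop) (k : nat).
Hypotheses (sM : submonoid M) (Mk : ~ M k).

Let k_gt0 : 0 < k.
Proof. by case: sM => M0 _; case: (posnP k) Mk => // ->. Qed.

Let k_mem : k \in reflected_pattern M k.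
Proof. by case: sM => M0 _; rewrite mem_reflected_pattern subnn k_gt0 leqnn; apply/asboolP. Qed.

Lemma completion_reflected_pattern : completion (reflected_pattern M k) k.
Proof. by exists k, 0; split; rewrite ?k_mem ?mem_reflected_pattern ?subn0. Qed.

Lemma W_reflected_pattern : W M (reflected_pattern M k).
Proof.
split.
  split; first by apply/fset0Pn; exists k; apply: k_mem.
  by rewrite mem_reflected_pattern.
case: sM => _ MD n [j [i []]]; rewrite !mem_reflected_pattern.
move=> /andP[j_range /asboolP M_kj] i_notin lt_ij -> M_ji.
have := MD _ _ M_kj M_ji; have -> : (k - j + (j - i) = k - i)%N by lia.
case: (posnP i) => [-> |i_gt0 M_ki]; first by rewrite subn0.
by move/negP: i_notin; apply; apply/andP; split; [lia | exact/asboolP].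
Qed.

End ReflectedPattern.

Lemma W_subset (M M' : nat -> Prop) : submonoid M' -> W M = W M' -> forall k, M k -> M' k.
Proof.
move=> sM' eqW k Mk; apply: contrapT => M'k.
have : W M (reflected_pattern M' k) by rewrite eqW; exact: W_reflected_pattern.
by case=> _ /(_ k (completion_reflected_pattern sM' M'k)).
Qed.

Lemma dual_superpos_dual (v v' : {fset nat}) :
  bracket_pattern v -> bracket_pattern v' -> bnorm v = bnorm v' ->
  dual (superpos (dual v) (dual v')) = v `&` v'.
Proof.
move=> bp_v bp_v' eq_n.
have [[dv_ne _] [dv'_ne _]] := (bracket_pattern_dual bp_v, bracket_pattern_dual bp_v').
have [[v_ne v0] [v'_ne _]] := (bp_v, bp_v').
have vn := bnorm_mem v_ne; have v'n := bnorm_mem v'_ne; rewrite -eq_n in v'n.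
apply/fsetP => x /=; rewrite in_fsetI mem_dual bnorm_superpos // !bnorm_dual //.
rewrite -eq_n maxnn in_fsetU !mem_dual -eq_n negb_or !negb_and !negbK.
case: (posnP x) => [->|x_gt0]; first by rewrite (negbTE v0).
case: (leqP x (bnorm v)) => [le_xn|lt_nx]; last first.
  by apply/esym/negbTE; apply: contraTN lt_nx => /andP[/leq_bnorm]; rewrite -leqNgt.
have -> : bnorm v - (bnorm v - x) = x by lia.
rewrite leq_subr /=; case: (ltnP x (bnorm v)) => [lt_xn|le_nx].
  by rewrite subn_gt0 lt_xn.
have -> : x = bnorm v by lia.
by rewrite subnn vn v'n.
Qed.

Definition cat_completion (C : {fset nat} -> Prop) (k : nat) : Prop :=
  exists2 v, C v & completion v k.

Lemma submonoid_not_cat_completion C : submonoid (fun k => ~ cat_completion C k).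
Proof.
split; first by case=> v _ /completion_gt0.
move=> a b not_a not_b [v Cv vab].
case: (posnP a) => [a0|a_gt0]; first by apply: not_b; exists v; rewrite // -[b]add0n -a0.
case: (posnP b) => [b0|b_gt0]; first by apply: not_a; exists v; rewrite // -[a]addn0 -b0.
by case: (completion_add a_gt0 b_gt0 vab) => ?; [apply: not_a | apply: not_b]; exists v.
Qed.

Section BracketPatternCategory.
Variable C : {fset nat} -> Prop.
Hypothesis catC : bp_category C.

Lemma cat_bp v : C v -> bracket_pattern v.
Proof. by case: catC => bp _; apply: bp. Qed.

Lemma cat_bnorm_mem v : C v -> bnorm v \in v.
Proof. by case/cat_bp => v_ne _; apply: bnorm_mem. Qed.

Lemma cat_superpos v v' : C v -> C v' -> C (superpos v v').
Proof. by case: catC => _ [sup _]; apply: sup. Qed.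

Lemma cat_dual v : C v -> C (dual v).
Proof. by case: catC => _ [_ [dl _]]; apply: dl. Qed.

Lemma cat_proj v j : C v -> j \in v -> C (proj j v).
Proof. by case: catC => _ [_ [_ pr]]; apply: pr. Qed.

Lemma cat_fsetI v v' : C v -> C v' -> bnorm v = bnorm v' -> C (v `&` v').
Proof.
move=> Cv Cv' eq_n; rewrite -(dual_superpos_dual (cat_bp Cv) (cat_bp Cv') eq_n).
by apply/cat_dual/cat_superpos; apply: cat_dual.
Qed.

Lemma cat_completion_bnorm k : cat_completion C k -> exists2 q, C q & bnorm q = k.
Proof.
case=> v Cv [j [i [jv iv lt_ij ->]]].
have ji_dual : (j - i)%N \in dual (proj j v).
  rewrite mem_dual bnorm_proj // mem_proj negb_and.
  have -> : j - (j - i) = i by lia.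
  by rewrite iv subn_gt0 lt_ij leq_subr.
exists (proj (j - i) (dual (proj j v))); last exact: bnorm_proj.
by apply: cat_proj ji_dual; apply/cat_dual/cat_proj.
Qed.

Lemma cat_avoid n i : 0 < i < n -> cat_completion C n -> cat_completion C (n - i) ->
  exists v, [/\ C v, bnorm v = n & i \notin v].
Proof.
move=> i_range /cat_completion_bnorm[u Cu nu] /cat_completion_bnorm[q Cq nq].
have [bp_q bp_u] := (cat_bp Cq, cat_bp Cu); have [[q_ne _] [u_ne _]] := (bp_q, bp_u).
have n_qu : bnorm (superpos q u) = n by rewrite bnorm_superpos // nq nu; lia.
have bp_qu := bracket_pattern_superpos bp_q bp_u.
exists (dual (superpos q u)); split.
- exact/cat_dual/cat_superpos.
- by rewrite bnorm_dual.
- by rewrite mem_dual n_qu inE -{1}nq cat_bnorm_mem // andbF.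
Qed.

Lemma cat_avoid_all n (L : seq nat) :
  cat_completion C n -> {in L, forall i, 0 < i < n /\ cat_completion C (n - i)} ->
  exists v, [/\ C v, bnorm v = n & {in L, forall i, i \notin v}].
Proof.
move=> Cn; elim: L => [_|i L IH holes].
  by have [u Cu nu] := cat_completion_bnorm Cn; exists u.
have [i_range Cni] := holes i (mem_head i L).
have [v [Cv nv v_avoids]] := IH (fun j jL => holes j (@mem_behead _ (i :: L) j jL)).
have [u [Cu nu iu]] := cat_avoid i_range Cn Cni.
have n_vu : bnorm (v `&` u) = n.
  apply: bnormE => [|x /=]; last by rewrite in_fsetI => /andP[/leq_bnorm]; rewrite nv.
  by rewrite in_fsetI -{1}nv -nu !cat_bnorm_mem.
exists (v `&` u); split => //; first by apply: cat_fsetI; rewrite ?nv ?nu.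
move=> j /=; rewrite in_cons in_fsetI negb_and => /orP[/eqP -> | /v_avoids ->] //.
by rewrite iu orbT.
Qed.

Lemma cat_subpattern_top w : bracket_pattern w ->
  (forall k, completion w k -> cat_completion C k) ->
  exists v, [/\ C v, v `<=` w & bnorm w \in v].
Proof.
move=> bp_w Cw; have n_gt0 := bnorm_gt0 bp_w; have [w_ne w0] := bp_w.
have nw := bnorm_mem w_ne.
have Cn : cat_completion C (bnorm w) by apply: Cw; exists (bnorm w), 0; rewrite subn0.
pose holes := [seq i <- iota 1 (bnorm w) | i \notin w].
have [v [Cv nv v_avoids]] :
    exists v, [/\ C v, bnorm v = bnorm w & {in holes, forall i, i \notin v}].
  apply: cat_avoid_all => // i; rewrite mem_filter mem_iota => /andP[iw i_range].
  have i_ne : i != bnorm w by apply: contraNneq iw => ->.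
  by split; [lia | apply: Cw; exists (bnorm w), i; split => //; lia].
exists v; split => //; last by rewrite -nv cat_bnorm_mem.
apply/fsubsetP => x xv; apply: contraT => xw.
have [_ v0] := cat_bp Cv; have x_le := leq_bnorm xv.
have x_gt0 : 0 < x by rewrite lt0n; apply: contraNneq v0 => <-.
have := v_avoids x; rewrite mem_filter xw mem_iota xv.
by apply; apply/and3P; split => //; lia.
Qed.

Lemma cat_cover w v0 (L : seq nat) : C v0 -> v0 `<=` w ->
  {in L, forall j, exists v, [/\ C v, v `<=` w & j \in v]} ->
  exists v, [/\ C v, v `<=` w & {subset L <= v}].
Proof.
move=> Cv0 v0w; elim: L => [_|j L IH covers]; first by exists v0.
have [v [Cv vw Lv]] := IH (fun i iL => covers i (@mem_behead _ (j :: L) i iL)).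
have [u [Cu uw ju]] := covers j (mem_head j L).
exists (superpos v u); split; [exact: cat_superpos | by rewrite fsubUset vw uw |].
by move=> i; rewrite in_cons in_fsetU => /orP[/eqP -> | /Lv ->]; rewrite ?ju ?orbT.
Qed.

Lemma cat_complete w : bracket_pattern w ->
  (forall k, completion w k -> cat_completion C k) -> C w.
Proof.
move=> bp_w Cw; have [w_ne _] := bp_w.
have covers j : j \in w -> exists v, [/\ C v, v `<=` w & j \in v].
  move=> jw; have [v [Cv vw jv]] := cat_subpattern_top (bracket_pattern_proj bp_w jw)
    (fun k wk => Cw k (completion_proj wk)).
  exists v; split => //; last by rewrite bnorm_proj in jv.
  by apply: fsubset_trans vw _; apply/fsubsetP => x; rewrite mem_proj => /andP[].
have [v0 [Cv0 v0w _]] := covers _ (bnorm_mem w_ne).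
have [v [Cv vw wv]] := cat_cover Cv0 v0w covers.
suff -> : w = v by [].
by apply/eqP; rewrite eqEfsubset vw andbT; apply/fsubsetP.
Qed.

Lemma W_not_cat_completion : W (fun k => ~ cat_completion C k) = C.
Proof.
apply/funext => w; apply/propext; split => [[bp_w Cw] | Cw].
  by apply: cat_complete => // k /Cw /contrapT.
by split; [exact: cat_bp | move=> k wk; apply; exists w].
Qed.

End BracketPatternCategory.

Theorem proposition7p17 :
  (forall M : nat -> Prop, submonoid M -> bp_category (W M)) /\
  (forall M M' : nat -> Prop, submonoid M -> submonoid M' -> W M = W M' -> M = M') /\
  (forall C : {fset nat} -> Prop, bp_category C ->
     exists M : nat -> Prop, submonoid M /\ W M = C).
Proof.
split; first by move=> M _; apply: W_bp_category.
split.
  move=> M M' sM sM' eqW; apply/funext => k; apply/propext.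
  by split; apply: W_subset => //; rewrite eqW.
move=> C catC; exists (fun k => ~ cat_completion C k).
by split; [apply: submonoid_not_cat_completion | apply: W_not_cat_completion].
Qed.
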